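(* Consider the economy without knowledge synergies and assume the abundance condition (A). Then for every $\boldsymbol m\in[0,1]^2$ an equilibrium exists, every equilibrium maximizes total output over feasible allocations, and in every equilibrium $r^*=F(\boldsymbol m)$ and $w^*=\max\{\tilde w_s,\tilde w_b,\tilde w_t\}$. Moreover, with these prices the following allocations form an equilibrium: if $\boldsymbol m\in\tilde R_s$: $\alpha_s^*=1$, $\mu_s^*=\mu$; if $\boldsymbol m\in\tilde R_b$: $\alpha_b^*=1$, $\mu_b^*=n(\boldsymbol m)$, $\mu_s^*=\mu-\mu_b^*$; if $\boldsymbol m\in\tilde R_t$: $\alpha_t^*=1$, $\mu_t^*=1/n(\boldsymbol h)$, $\mu_s^*=\mu-\mu_t^*$.
   Context: Fix a cumulative distribution function $F$ on $[0,1]^2$ with a density $f$ that has full support on $[0,1]^2$, $c\in(0,1)$, human knowledge $\boldsymbol h\in(0,1)^2$ (unit mass of humans, one unit of time each), and a mass $\mu>0$ of machines with knowledge $\boldsymbol m\in[0,1]^2$ (one unit of time each). Write $\boldsymbol x\wedge\boldsymbol y=(\min\{x_1,y_1\},\min\{x_2,y_2\})$, $F(\boldsymbol m\oplus\boldsymbol h):=F(\boldsymbol m)+F(\boldsymbol h)-F(\boldsymbol m\wedge\boldsymbol h)$ (the probability that the human or the machine can solve a problem on its own), and for $F(\boldsymbol x)<1$, $n(\boldsymbol x)=\frac1{c(1-F(\boldsymbol x))}$. Without synergies, given wage $w\ge0$ and rental $r\ge0$, the firm types and profits are: single-layer non-automated $F(\boldsymbol h)-w$; single-layer automated $F(\boldsymbol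 m)-r$; bottom-automated $b$ (one human solver, $n(\boldsymbol m)$ machine workers; available when $F(\boldsymbol m)<1$) $\Pi_b=n(\boldsymbol m)[F(\boldsymbol m\oplus\boldsymbol h)-r]-w$; top-automated $t$ (one machine solver, $n(\boldsymbol h)$ human workers) $\Pi_t=n(\boldsymbol h)[F(\boldsymbol m\oplus\boldsymbol h)-w]-r$. A feasible allocation is $(\alpha_s,\alpha_b,\alpha_t,\mu_s,\mu_b,\mu_t)\ge0$ with $\mu_b=\alpha_bn(\boldsymbol m)$, $\mu_t=\alpha_t/n(\boldsymbol h)$, $\alpha_s+\alpha_b+\alpha_t=1$, $\mu_s+\mu_b+\mu_t=\mu$; total output $Y=\alpha_bn(\boldsymbol m)F(\boldsymbol m\oplus\boldsymbol h)+\alpha_tF(\boldsymbol m\oplus\boldsymbol h)+\alpha_sF(\boldsymbol h)+\mu_sF(\boldsymbol m)$. An equilibrium is a feasible allocation with prices $(w,r)\ge0$ such that all firm types have nonpositive profit and types used with positive mass earn zero profit. Define $\tilde w_s=F(\boldsymbol h)$, $\tilde w_b=n(\boldsymbol m)(F(\boldsymbol m\oplus\boldsymbol h)-F(\boldsymbol m))$ (with $\tilde w_b:=0$ if $F(\boldsymbol m)=1$), $\tilde w_t=F(\boldsymbol m\oplus\boldsymbol h)-F(\boldsymbol m)/n(\boldsymbol h)$; $\tilde R_s=\{\boldsymbol m:\tilde w_s\ge\max\{\tilde w_b,\tilde w_t\}\}$, $\tilde R_b=\{\boldsymbol m:\tilde w_b>\max\{\tilde w_s,\tilde w_t\}\}$,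 $\tilde R_t=[0,1]^2\setminus(\tilde R_s\cup\tilde R_b)$. Abundance condition (A): $\mu>\max\Big\{\frac1{c(1-F(1,h_2))},\frac1{c(1-F(h_1,1))}\Big\}$. *)

From HB Require Import structures.
From mathcomp Require Import all_boot all_order all_algebra.
From mathcomp Require Import all_classical all_reals all_analysis.
Set Implicit Arguments. Unset Strict Implicit. Unset Printing Implicit Defensive.
Import Order.TTheory GRing.Theory Num.Theory.
Local Open Scope classical_set_scope.
Local Open Scope ring_scope.

Section Defs.
Variable R : realType.

Definition leb2 := ((@lebesgue_measure R) \x (@lebesgue_measure R))%E.

Definition unit_square : set (R * R) := `[0, 1] `*` `[0, 1].
Definition in_unit_square (x : R * R) : Prop := 0 <= x.1 <= 1 /\ 0 <= x.2 <= 1.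

(** f is a probability density on [0,1]^2 with full support on [0,1]^2:
    measurable, nonnegative, total mass 1 on the square, and every
    nondegenerate sub-rectangle of the square has positive mass
    (equivalently, every open set meeting the square has positive mass). *)
Definition density_full_support (f : R * R -> R) : Prop :=
  measurable_fun setT f /\ (forall p, 0 <= f p) /\
  (\int[leb2]_(p in unit_square) (f p)%:E = 1)%E /\
  (forall a b c d : R, 0 <= a -> a < b -> b <= 1 -> 0 <= c -> c < d -> d <= 1 ->
     (0 < \int[leb2]_(p in `[a, b] `*` `[c, d]) (f p)%:E)%E).

Definition cdf2 (f : R * R -> R) (x : R * R) : R :=
  fine (\int[leb2]_(p in `[0, x.1] `*` `[0, x.2]) (f p)%:E).

Definition meet2 (x y : R * R) : R * R := (Num.min x.1 y.1, Num.min x.2 y.2).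

Definition Foplus (F : R * R -> R) (m h : R * R) : R := F m + F h - F (meet2 m h).

(** n(x) = 1 / (c (1 - F x)), meaningful when F x < 1 *)
Definition nsp (F : R * R -> R) (c : R) (x : R * R) : R := 1 / (c * (1 - F x)).

Record alloc := Alloc {
  al_s : R; al_b : R; al_t : R; mu_s : R; mu_b : R; mu_t : R }.

(** feasibility; the bottom-automated type is available only when F(m) < 1,
    hence alpha_b = 0 is required otherwise *)
Definition feasible (F : R * R -> R) (c : R) (h m : R * R) (mu : R) (A : alloc) : Prop :=
  (0 <= al_s A /\ 0 <= al_b A /\ 0 <= al_t A /\ 0 <= mu_s A /\ 0 <= mu_b A /\ 0 <= mu_t A) /\
  (F m = 1 -> al_b A = 0) /\
  mu_b A = al_b A * nsp F c m /\ mu_t A = al_t A / nsp F c h /\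
  al_s A + al_b A + al_t A = 1 /\ mu_s A + mu_b A + mu_t A = mu.

Definition output (F : R * R -> R) (c : R) (h m : R * R) (A : alloc) : R :=
  al_b A * nsp F c m * Foplus F m h + al_t A * Foplus F m h
  + al_s A * F h + mu_s A * F m.

Definition profit_s (F : R * R -> R) (h : R * R) (w : R) : R := F h - w.
Definition profit_a (F : R * R -> R) (m : R * R) (r : R) : R := F m - r.
Definition profit_b (F : R * R -> R) (c : R) (h m : R * R) (w r : R) : R :=
  nsp F c m * (Foplus F m h - r) - w.
Definition profit_t (F : R * R -> R) (c : R) (h m : R * R) (w r : R) : R :=
  nsp F c h * (Foplus F m h - w) - r.

Definition equilibrium (F : R * R -> R) (c : R) (h m : R * R) (mu : R)
    (A : alloc) (w r : R) : Prop :=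
  feasible F c h m mu A /\ 0 <= w /\ 0 <= r /\
  profit_s F h w <= 0 /\ profit_a F m r <= 0 /\
  (F m < 1 -> profit_b F c h m w r <= 0) /\ profit_t F c h m w r <= 0 /\
  (0 < al_s A -> profit_s F h w = 0) /\ (0 < mu_s A -> profit_a F m r = 0) /\
  (0 < al_b A -> profit_b F c h m w r = 0) /\ (0 < al_t A -> profit_t F c h m w r = 0).

Definition wt_s (F : R * R -> R) (h : R * R) : R := F h.
Definition wt_b (F : R * R -> R) (c : R) (h m : R * R) : R :=
  if F m == 1 then 0 else nsp F c m * (Foplus F m h - F m).
Definition wt_t (F : R * R -> R) (c : R) (h m : R * R) : R :=
  Foplus F m h - F m / nsp F c h.

Definition in_Rs (F : R * R -> R) (c : R) (h m : R * R) : bool :=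
  Num.max (wt_b F c h m) (wt_t F c h m) <= wt_s F h.
Definition in_Rb (F : R * R -> R) (c : R) (h m : R * R) : bool :=
  Num.max (wt_s F h) (wt_t F c h m) < wt_b F c h m.
Definition in_Rt (F : R * R -> R) (c : R) (h m : R * R) : bool :=
  ~~ in_Rs F c h m && ~~ in_Rb F c h m.

Definition w_star (F : R * R -> R) (c : R) (h m : R * R) : R :=
  Num.max (wt_s F h) (Num.max (wt_b F c h m) (wt_t F c h m)).
Definition r_star (F : R * R -> R) (m : R * R) : R := F m.

Definition alloc_star (F : R * R -> R) (c : R) (h m : R * R) (mu : R) : alloc :=
  if in_Rs F c h m then Alloc 1 0 0 mu 0 0
  else if in_Rb F c h m then Alloc 0 1 0 (mu - nsp F c m) (nsp F c m) 0
  else Alloc 0 0 1 (mu - 1 / nsp F c h) 0 (1 / nsp F c h).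

Definition abundance (F : R * R -> R) (c : R) (h : R * R) (mu : R) : Prop :=
  Num.max (nsp F c (1, h.2)) (nsp F c (h.1, 1)) < mu.

End Defs.

From HB Require Import structures.
From mathcomp Require Import all_boot all_order all_algebra.
From mathcomp Require Import all_classical all_reals all_analysis.
From mathcomp Require Import measurable_realfun.
From mathcomp Require Import ring lra.
Set Implicit Arguments. Unset Strict Implicit. Unset Printing Implicit Defensive.
Import Order.TTheory GRing.Theory Num.Theory.
Local Open Scope ring_scope.

(* With the rental pinned at r = F(m), every firm type becomes a linear technology
   turning one unit of human time into a candidate wage w~_s, w~_b or w~_t, so the
   competitive wage is their maximum and the humans go where it is attained.  Condition
   (A) guarantees that some machines are always left over to work alone, which forces
   r = F(m) in every equilibrium; and since output minus factor payments is the sum of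
   the (nonpositive) profits weighted by firm masses, any equilibrium maximizes output. *)

Section DensityCdf.
Local Open Scope classical_set_scope.
Variables (R : realType) (f : R * R -> R).
Hypothesis f_density : density_full_support f.

Let rect (a b c d : R) : set (R * R) := `[a, b] `*` `[c, d].

Let measurable_rect (a b c d : R) : measurable (rect a b c d).
Proof. exact: measurableX (measurable_itv _) (measurable_itv _). Qed.

Let measurable_density (D : set (R * R)) : measurable_fun D (EFin \o f).
Proof.
by case: f_density => mf _; apply/measurable_EFinP; exact: measurable_funS mf.
Qed.

Let density_ge0 (p : R * R) : (0 <= (f p)%:E)%E.
Proof. by case: f_density => _ [f_ge0 _]; rewrite lee_fin. Qed.

Lemma integral_density_ge0 (D : set (R * R)) :
  (0 <= \int[@leb2 R]_(p in D) (f p)%:E)%E.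
Proof. by apply: integral_ge0 => p _. Qed.

Lemma le_integral_rect (a b c d a' b' c' d' : R) :
  a' <= a -> b <= b' -> c' <= c -> d <= d' ->
  (\int[@leb2 R]_(p in rect a b c d) (f p)%:E
     <= \int[@leb2 R]_(p in rect a' b' c' d') (f p)%:E)%E.
Proof.
move=> aa' bb' cc' dd'.
apply: ge0_subset_integral => //;
  [exact: measurable_rect|exact: measurable_rect|exact: measurable_density|].
move=> [x y] [/=]; rewrite !in_itv /= => /andP[ax xb] /andP[cy yd].
by split; rewrite /= in_itv /=; apply/andP; split;
  [exact: le_trans ax|exact: le_trans bb'|exact: le_trans cy|exact: le_trans dd'].
Qed.

Lemma integral_rect_le1 (a b c d : R) : 0 <= a -> b <= 1 -> 0 <= c -> d <= 1 ->
  (\int[@leb2 R]_(p in rect a b c d) (f p)%:E <= 1)%E.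
Proof.
by case: f_density => _ [_ [<- _]] *; exact: le_integral_rect.
Qed.

Lemma cdf2E (x : R * R) : in_unit_square x ->
  (cdf2 f x)%:E = (\int[@leb2 R]_(p in rect 0 x.1 0 x.2) (f p)%:E)%E.
Proof.
case=> /andP[_ x1_le1] /andP[_ x2_le1]; rewrite /cdf2 fineK //.
rewrite ge0_fin_numE ?integral_density_ge0 //.
exact: le_lt_trans (integral_rect_le1 (lexx 0) x1_le1 (lexx 0) x2_le1) (ltry 1).
Qed.

Lemma cdf2_unit (x : R * R) : in_unit_square x -> 0 <= cdf2 f x <= 1.
Proof.
move=> x_unit; rewrite -!lee_fin (cdf2E x_unit) integral_density_ge0 /=.
by case: x_unit => /andP[_ ?] /andP[_ ?]; exact: integral_rect_le1.
Qed.

Lemma cdf2_monotone (x y : R * R) : in_unit_square x -> in_unit_square y ->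
  x.1 <= y.1 -> x.2 <= y.2 -> cdf2 f x <= cdf2 f y.
Proof.
move=> x_unit y_unit xy1 xy2; rewrite -lee_fin (cdf2E x_unit) (cdf2E y_unit).
exact: le_integral_rect.
Qed.

Lemma integral_rect_lt1 (a b c d a' b' c' d' : R) :
  [disjoint rect a b c d & rect a' b' c' d'] ->
  rect a b c d `|` rect a' b' c' d' `<=` @unit_square R ->
  (0 < \int[@leb2 R]_(p in rect a' b' c' d') (f p)%:E)%E ->
  (\int[@leb2 R]_(p in rect a b c d) (f p)%:E < 1)%E.
Proof.
move=> disj sub pos; case: f_density => _ [_ [mass1 _]].
have union_le1 : (\int[@leb2 R]_(p in rect a b c d `|` rect a' b' c' d') (f p)%:E <= 1)%E.
  rewrite -mass1; apply: ge0_subset_integral => //.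
  - exact: measurableU (measurable_rect _ _ _ _) (measurable_rect _ _ _ _).
  - exact: measurable_rect.
  - exact: measurable_density.
rewrite ge0_integral_setU // in union_le1;
  [|exact: measurable_rect..|exact: measurable_density].
have fin_num_le1 (e : \bar R) : (0 <= e)%E -> (e <= 1)%E -> e \is a fin_num.
  by move=> e_ge0 e_le1; rewrite ge0_fin_numE // (le_lt_trans e_le1) ?ltry.
have fin' := fin_num_le1 _ (integral_density_ge0 _)
  (le_trans (leeDr _ (integral_density_ge0 _)) union_le1).
have fin := fin_num_le1 _ (integral_density_ge0 _)
  (le_trans (leeDl _ (integral_density_ge0 _)) union_le1).
move: union_le1 pos; rewrite -(fineK fin) -(fineK fin') -EFinD !lee_fin !lte_fin.
by move=> union_le1 pos; apply: lt_le_trans union_le1; rewrite ltrDl.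
Qed.

Lemma cdf2_right_lt1 (t : R) : 0 <= t < 1 -> cdf2 f (1, t) < 1.
Proof.
case/andP=> t_ge0 t_lt1.
have unit : in_unit_square (1, t) by split; rewrite /= ?lexx ?ler01 ?t_ge0 ?(ltW t_lt1).
rewrite -lte_fin (cdf2E unit) /=.
apply: (@integral_rect_lt1 _ _ _ _ 0 1 ((t + 1) / 2) 1).
- rewrite disj_set2E; apply/eqP/seteqP; split => // -[p q] [[_ /= q1] [_ /= q2]].
  by move: q1 q2; rewrite !in_itv /= => /andP[_ ?] /andP[? _]; lra.
- move=> [p q] [] [/=]; rewrite !in_itv /= => /andP[? ?] /andP[? ?];
  by split; rewrite /= in_itv /=; apply/andP; split; lra.
- by case: f_density => _ [_ [_ pos]]; apply: pos; lra.
Qed.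

Lemma cdf2_top_lt1 (t : R) : 0 <= t < 1 -> cdf2 f (t, 1) < 1.
Proof.
case/andP=> t_ge0 t_lt1.
have unit : in_unit_square (t, 1) by split; rewrite /= ?lexx ?ler01 ?t_ge0 ?(ltW t_lt1).
rewrite -lte_fin (cdf2E unit) /=.
apply: (@integral_rect_lt1 _ _ _ _ ((t + 1) / 2) 1 0 1).
- rewrite disj_set2E; apply/eqP/seteqP; split => // -[p q] [[/= p1 _] [/= p2 _]].
  by move: p1 p2; rewrite !in_itv /= => /andP[_ ?] /andP[? _]; lra.
- move=> [p q] [] [/=]; rewrite !in_itv /= => /andP[? ?] /andP[? ?];
  by split; rewrite /= in_itv /=; apply/andP; split; lra.
- by case: f_density => _ [_ [_ pos]]; apply: pos; lra.
Qed.

End DensityCdf.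

Lemma complementary_slack_eq0 (R : realDomainType) (x y : R) :
  0 <= x -> (0 < x -> y = 0) -> x * y = 0.
Proof.
rewrite le_eqVlt => /predU1P[<- _|x_gt0 y0]; first by rewrite mul0r.
by rewrite y0 // mulr0.
Qed.

Lemma complementary_slack_le0 (R : realDomainType) (x y : R) :
  0 <= x -> (0 < x -> y <= 0) -> x * y <= 0.
Proof.
rewrite le_eqVlt => /predU1P[<- _|x_gt0 y_le0]; first by rewrite mul0r.
by rewrite pmulr_rle0 // y_le0.
Qed.

Section Welfare.
Variables (R : realType) (F : R * R -> R) (c : R) (h m : R * R) (mu : R).
Hypotheses (nsp_h_gt0 : 0 < nsp F c h) (Fm_le1 : F m <= 1).

(* Top-automated firms are counted by their machine solvers, [mu_t = alpha_t / n(h)]. *)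
Lemma output_profit_decomposition (A : alloc R) (w r : R) :
  feasible F c h m mu A ->
  output F c h m A = w + r * mu
    + al_b A * profit_b F c h m w r + mu_t A * profit_t F c h m w r
    + al_s A * profit_s F h w + mu_s A * profit_a F m r.
Proof.
case=> _ [_ [mbE [mtE [sum_al sum_mu]]]].
have -> : w + r * mu = w * (al_s A + al_b A + al_t A) + r * (mu_s A + mu_b A + mu_t A).
  by rewrite sum_al sum_mu mulr1.
rewrite mbE mtE /output /profit_b /profit_t /profit_s /profit_a.
by field; rewrite gt_eqF.
Qed.

Lemma feasibleI (A : alloc R) :
  0 <= al_s A -> 0 <= al_b A -> 0 <= al_t A ->
  0 <= mu_s A -> 0 <= mu_b A -> 0 <= mu_t A ->
  (F m = 1 -> al_b A = 0) ->
  mu_b A = al_b A * nsp F c m -> mu_t A = al_t A / nsp F c h ->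
  al_s A + al_b A + al_t A = 1 -> mu_s A + mu_b A + mu_t A = mu ->
  feasible F c h m mu A.
Proof. by move=> *; rewrite /feasible; tauto. Qed.

Lemma feasible_bottom_available (A : alloc R) :
  feasible F c h m mu A -> 0 < al_b A -> F m < 1.
Proof.
case=> _ [Fb _] b_gt0; rewrite lt_neqAle Fm_le1 andbT; apply/eqP => /Fb.
by move/eqP: (gt_eqF b_gt0).
Qed.

Lemma feasible_humans_employed (A : alloc R) : feasible F c h m mu A ->
  [\/ 0 < al_s A, 0 < al_b A | 0 < al_t A].
Proof.
case=> [[s0 [b0 [t0 _]]] [_ [_ [_ [sum_al _]]]]].
have [s_gt0 | s_le0] := ltrP 0 (al_s A); first exact: Or31.
have [b_gt0 | b_le0] := ltrP 0 (al_b A); first exact: Or32.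
by apply: Or33; lra.
Qed.

Lemma equilibrium_output_max (A A' : alloc R) (w r : R) :
  equilibrium F c h m mu A w r -> feasible F c h m mu A' ->
  output F c h m A' <= output F c h m A.
Proof.
move=> [fA [_ [_ [ps [pa [pb [pt [zs [za [zb zt]]]]]]]]]] fA'.
rewrite (output_profit_decomposition w r fA) (output_profit_decomposition w r fA').
case: (fA) => [[s0 [b0 [t0 [ms0 [_ mt0]]]]] [_ [_ [mtE _]]]].
case: (fA') => [[s0' [b0' [_ [ms0' [_ mt0']]]]] _].
have t_used : 0 < mu_t A -> 0 < al_t A.
  by rewrite mtE pmulr_lgt0 // invr_gt0.
rewrite (complementary_slack_eq0 b0 zb) (complementary_slack_eq0 s0 zs).
rewrite (complementary_slack_eq0 ms0 za) (complementary_slack_eq0 mt0 (zt \o t_used)).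
have := complementary_slack_le0 b0' (pb \o feasible_bottom_available fA').
have := complementary_slack_le0 mt0' (fun=> pt).
have := complementary_slack_le0 s0' (fun=> ps).
have := complementary_slack_le0 ms0' (fun=> pa).
lra.
Qed.

End Welfare.

Lemma nsp_gt0 (R : realType) (F : R * R -> R) (c : R) (x : R * R) :
  0 < c -> F x < 1 -> 0 < nsp F c x.
Proof. by move=> c_gt0 Fx; rewrite /nsp div1r invr_gt0 mulr_gt0 // subr_gt0. Qed.

Lemma nsp_le (R : realType) (F : R * R -> R) (c : R) (x y : R * R) :
  0 < c -> F x <= F y -> F y < 1 -> nsp F c x <= nsp F c y.
Proof.
move=> c_gt0 Fxy Fy; have Fx := le_lt_trans Fxy Fy.
rewrite /nsp !div1r lef_pV2 ?posrE ?mulr_gt0 ?subr_gt0 //.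
by rewrite ler_wpM2l ?(ltW c_gt0) // lerB.
Qed.

Lemma invr_nsp (R : realType) (F : R * R -> R) (c : R) (x : R * R) :
  (nsp F c x)^-1 = c * (1 - F x).
Proof. by rewrite /nsp div1r invrK. Qed.

Lemma invr_nsp_lt1 (R : realType) (F : R * R -> R) (c : R) (x : R * R) :
  0 < c -> c < 1 -> 0 <= F x -> (nsp F c x)^-1 < 1.
Proof.
move=> c_gt0 c_lt1 Fx; rewrite invr_nsp; apply: le_lt_trans c_lt1.
by rewrite ler_piMr ?(ltW c_gt0) // gerBl.
Qed.

Lemma nsp_ge1 (R : realType) (F : R * R -> R) (c : R) (x : R * R) :
  0 < c -> c < 1 -> 0 <= F x -> F x < 1 -> 1 <= nsp F c x.
Proof.
move=> c_gt0 c_lt1 Fx_ge0 Fx_lt1.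
rewrite /nsp div1r invf_ge1 ?mulr_gt0 ?subr_gt0 // -invr_nsp.
exact: ltW (invr_nsp_lt1 c_gt0 c_lt1 Fx_ge0).
Qed.

Lemma profit_b_at_rental (R : realType) (F : R * R -> R) c h m (w : R) :
  F m != 1 -> profit_b F c h m w (F m) = wt_b F c h m - w.
Proof. by move=> Fm1; rewrite /profit_b /wt_b (negbTE Fm1). Qed.

Lemma profit_t_at_rental (R : realType) (F : R * R -> R) c h m (w : R) :
  nsp F c h != 0 -> profit_t F c h m w (F m) = nsp F c h * (wt_t F c h m - w).
Proof. by move=> nh0; rewrite /profit_t /wt_t; field. Qed.

Section NoSynergy.
Variables (R : realType) (F : R * R -> R) (c : R) (h : R * R) (mu : R).
Hypotheses (F_unit : forall x, in_unit_square x -> 0 <= F x <= 1)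
  (F_mono : forall x y, in_unit_square x -> in_unit_square y ->
     x.1 <= y.1 -> x.2 <= y.2 -> F x <= F y)
  (F_right_lt1 : F (1, h.2) < 1) (F_top_lt1 : F (h.1, 1) < 1)
  (c_gt0 : 0 < c) (c_lt1 : c < 1) (h_unit : in_unit_square h)
  (mu_abundant : abundance F c h mu).
Variables (m : R * R).
Hypothesis m_unit : in_unit_square m.

Let right_unit : in_unit_square (1, h.2).
Proof. by case: h_unit => _ h2; split; rewrite //= ler01 lexx. Qed.

Let top_unit : in_unit_square (h.1, 1).
Proof. by case: h_unit => h1 _; split; rewrite //= ler01 lexx. Qed.

Let F_ge0 x : in_unit_square x -> 0 <= F x.
Proof. by move/F_unit/andP=> []. Qed.

Let F_le1 x : in_unit_square x -> F x <= 1.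
Proof. by move/F_unit/andP=> []. Qed.

Lemma Fh_lt1 : F h < 1.
Proof.
apply: le_lt_trans F_right_lt1; apply: F_mono => //=.
by case: h_unit => /andP[].
Qed.

Lemma nsp_h_gt0 : 0 < nsp F c h.
Proof. exact: nsp_gt0 Fh_lt1. Qed.

Lemma invr_nsp_h_lt_mu : (nsp F c h)^-1 < mu.
Proof.
move: mu_abundant; rewrite /abundance gt_max => /andP[ab _]; apply: lt_trans ab.
apply: lt_le_trans (invr_nsp_lt1 c_gt0 c_lt1 (F_ge0 h_unit)) _.
exact: nsp_ge1 c_gt0 c_lt1 (F_ge0 right_unit) F_right_lt1.
Qed.

Lemma nsp_lt_mu : F (meet2 m h) != F h -> F m < 1 /\ nsp F c m < mu.
Proof.
move=> ne; move: mu_abundant; rewrite /abundance gt_max => /andP[ab_right ab_top].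
suff [x [Fmx Fx_lt1 nx_lt]] : exists x, [/\ F m <= F x, F x < 1 & nsp F c x < mu].
  split; first exact: le_lt_trans Fmx Fx_lt1.
  exact: le_lt_trans (nsp_le c_gt0 Fmx Fx_lt1) nx_lt.
case: (m_unit) => /andP[_ m1_le1] /andP[_ m2_le1].
have [h1_le | m1_lt] := leP h.1 m.1; last first.
  by exists (h.1, 1); split => //; apply: F_mono => //=; exact: ltW.
have [h2_le | m2_lt] := leP h.2 m.2; last first.
  by exists (1, h.2); split => //; apply: F_mono => //=; exact: ltW.
by move: ne; rewrite /meet2 (min_r h1_le) (min_r h2_le) -surjective_pairing eqxx.
Qed.

Lemma single_machines_pos (A : alloc R) : feasible F c h m mu A ->
  al_b A = 0 \/ F (meet2 m h) != F h -> 0 < mu_s A.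
Proof.
case=> [[s0 [b0 [t0 _]]] [_ [mbE [mtE [sum_al sum_mu]]]]] b0_or_ne.
suff : mu_b A + mu_t A < mu by lra.
have bt_le1 : al_b A + al_t A <= 1 by lra.
have inv_ge0 : 0 <= (nsp F c h)^-1 by rewrite invr_ge0 ltW ?nsp_h_gt0.
case: b0_or_ne => [b_eq0 | /nsp_lt_mu [Fm_lt1 nm_lt]].
  rewrite mbE mtE b_eq0 mul0r add0r; apply: le_lt_trans invr_nsp_h_lt_mu.
  by rewrite ler_piMl //; lra.
pose M := Num.max (nsp F c m) (nsp F c h)^-1.
have M_ge0 : 0 <= M by rewrite le_max inv_ge0 orbT.
apply: (@le_lt_trans _ _ ((al_b A + al_t A) * M)).
  by rewrite mulrDl mbE mtE lerD // ler_wpM2l // le_max lexx ?orbT.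
apply: le_lt_trans (ler_piMl M_ge0 bt_le1) _.
by rewrite gt_max nm_lt invr_nsp_h_lt_mu.
Qed.

Let Fm_le1 : F m <= 1. Proof. exact: F_le1. Qed.

(* Either some machines work alone, or bottom-automated firms are active while
   F(m /\ h) = F(h), so their machine workers add nothing; either zero-profit condition
   gives r <= F(m). *)
Lemma equilibrium_rental (A : alloc R) (w r : R) :
  equilibrium F c h m mu A w r -> r = F m.
Proof.
move=> [fA [w_ge0 [_ [_ [pa [_ [_ [_ [za [zb _]]]]]]]]]].
have Fm_le_r : F m <= r by rewrite -subr_le0.
apply/eqP; rewrite eq_le Fm_le_r andbT.
have [/andP[b_gt0 /eqP meet_eq] | /nandP b0_or_ne] :=
  boolP ((0 < al_b A) && (F (meet2 m h) == F h)); last first.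
  rewrite -subr_ge0 -[_ - _]/(profit_a F m r) za ?lexx //.
  apply: (single_machines_pos fA); case: b0_or_ne => [|->]; last by right.
  case: fA => [[_ [b0 _]] _]; rewrite -leNgt => b_le0.
  by left; apply/eqP; rewrite eq_le b_le0.
have nm_gt0 := nsp_gt0 c_gt0 (feasible_bottom_available Fm_le1 fA b_gt0).
move: (zb b_gt0); rewrite /profit_b /Foplus meet_eq addrK => /eqP.
by rewrite subr_eq0 => /eqP nm_eq; rewrite -subr_ge0 -(pmulr_rge0 _ nm_gt0) nm_eq.
Qed.

Let wt_s_le_star : wt_s F h <= w_star F c h m.
Proof. by rewrite /w_star le_max lexx. Qed.

Let wt_b_le_star : wt_b F c h m <= w_star F c h m.
Proof. by rewrite /w_star !le_max lexx orbT. Qed.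

Let wt_t_le_star : wt_t F c h m <= w_star F c h m.
Proof. by rewrite /w_star !le_max lexx !orbT. Qed.

Let nsp_h_neq0 : nsp F c h != 0.
Proof. exact: lt0r_neq0 nsp_h_gt0. Qed.

Lemma equilibrium_wage (A : alloc R) (w r : R) :
  equilibrium F c h m mu A w r -> w = w_star F c h m.
Proof.
move=> eqA; have r_eq := equilibrium_rental eqA; move: eqA; rewrite r_eq.
move=> [fA [w_ge0 [_ [ps [_ [pb [pt [zs [_ [zb zt]]]]]]]]]].
apply/eqP; rewrite eq_le; apply/andP; split.
  case: (feasible_humans_employed fA) => [s_gt0 | b_gt0 | t_gt0].
  - by move/eqP: (zs s_gt0); rewrite subr_eq0 => /eqP <-.
  - have Fm_neq1 := lt_eqF (feasible_bottom_available Fm_le1 fA b_gt0).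
    by move/eqP: (zb b_gt0); rewrite profit_b_at_rental ?Fm_neq1 // subr_eq0 => /eqP <-.
  - move/eqP: (zt t_gt0); rewrite profit_t_at_rental // mulf_eq0 (negbTE nsp_h_neq0).
    by rewrite subr_eq0 => /eqP <-.
rewrite /w_star !ge_max; apply/and3P; split; rewrite -subr_le0; first exact: ps.
  have [Fm_eq1 | Fm_neq1] := eqVneq (F m) 1.
    by rewrite /wt_b Fm_eq1 eqxx sub0r oppr_le0.
  by rewrite -profit_b_at_rental // pb // lt_neqAle Fm_neq1 Fm_le1.
by rewrite -(pmulr_rle0 _ nsp_h_gt0) -profit_t_at_rental.
Qed.

Lemma equilibrium_at_star (A : alloc R) : feasible F c h m mu A ->
  (0 < al_s A -> wt_s F h = w_star F c h m) ->
  (0 < al_b A -> wt_b F c h m = w_star F c h m) ->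
  (0 < al_t A -> wt_t F c h m = w_star F c h m) ->
  equilibrium F c h m mu A (w_star F c h m) (r_star F m).
Proof.
move=> fA es eb et; rewrite /equilibrium /r_star /profit_a subrr.
have Fm_neq1 b_gt0 := lt_eqF (feasible_bottom_available Fm_le1 fA b_gt0).
split; first exact: fA.
split; first exact: le_trans (F_ge0 h_unit) wt_s_le_star.
split; first exact: F_ge0.
split; first by rewrite /profit_s subr_le0.
split => //.
split; first by move=> /lt_eqF Fm_neq1'; rewrite profit_b_at_rental ?Fm_neq1' // subr_le0.
split; first by rewrite profit_t_at_rental // pmulr_rle0 ?nsp_h_gt0 // subr_le0.
split; first by move=> /es <-; rewrite /profit_s subrr.
split => //.
split; first by move=> b_gt0; rewrite profit_b_at_rental ?Fm_neq1 // eb // subrr.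
by move=> /et <-; rewrite profit_t_at_rental // subrr mulr0.
Qed.

Let mu_gt0 : 0 < mu.
Proof.
by apply: le_lt_trans invr_nsp_h_lt_mu; rewrite invr_ge0 ltW ?nsp_h_gt0.
Qed.

Lemma alloc_star_equilibrium :
  equilibrium F c h m mu (alloc_star F c h m mu) (w_star F c h m) (r_star F m).
Proof.
rewrite /alloc_star; case: ifP => [Rs | /negbT Rs]; last case: ifP => [Rb | /negbT Rb].
- apply: equilibrium_at_star => /=; [|by move=> _; rewrite /w_star max_l|by rewrite ltxx..].
  by apply: feasibleI; rewrite //= ?mul0r ?addr0 //; exact: ltW.
- move: Rb; rewrite /in_Rb gt_max => /andP[ws_lt wt_lt].
  have wb_gt0 : 0 < wt_b F c h m := le_lt_trans (F_ge0 h_unit) ws_lt.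
  have Fm_neq1 : F m != 1.
    by apply: contraTneq wb_gt0 => Fm_eq1; rewrite /wt_b Fm_eq1 eqxx ltxx.
  have meet_neq : F (meet2 m h) != F h.
    apply: contraTneq wb_gt0 => meet_eq.
    by rewrite /wt_b (negbTE Fm_neq1) /Foplus meet_eq addrK subrr mulr0 ltxx.
  have [Fm_lt1 nm_lt] := nsp_lt_mu meet_neq.
  apply: equilibrium_at_star => /=; [|by rewrite ltxx| |by rewrite ltxx].
    apply: feasibleI; rewrite //= ?mul0r ?mul1r ?addr0 ?add0r ?subrK //.
    - by rewrite subr_ge0 ltW.
    - exact: ltW (nsp_gt0 c_gt0 Fm_lt1).
    - by move/eqP: Fm_neq1.
  by move=> _; rewrite /w_star (max_l (ltW wt_lt)) max_r // ltW.
- move: Rs Rb; rewrite /in_Rs /in_Rb -ltNge -leNgt => ws_lt wb_le.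
  have wbt : wt_b F c h m <= wt_t F c h m.
    rewrite leNgt; apply/negP => wt_lt.
    rewrite (max_l (ltW wt_lt)) in ws_lt.
    by move: wb_le; rewrite le_max !leNgt ws_lt wt_lt.
  rewrite (max_r wbt) in ws_lt.
  apply: equilibrium_at_star => /=; [|by rewrite ltxx|by rewrite ltxx|].
    apply: feasibleI; rewrite //= ?mul0r ?addr0 ?add0r ?subrK // div1r.
    - by rewrite subr_ge0 ltW ?invr_nsp_h_lt_mu.
    - by rewrite invr_ge0 ltW ?nsp_h_gt0.
  by move=> _; rewrite /w_star (max_r wbt) max_r // ltW.
Qed.

Theorem no_synergy_equilibrium :
  (exists (A : alloc R) (w r : R), equilibrium F c h m mu A w r) /\
  (forall (A : alloc R) (w r : R), equilibrium F c h m mu A w r ->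
     forall A' : alloc R, feasible F c h m mu A' ->
       output F c h m A' <= output F c h m A) /\
  (forall (A : alloc R) (w r : R), equilibrium F c h m mu A w r ->
     r = F m /\ w = w_star F c h m) /\
  equilibrium F c h m mu (alloc_star F c h m mu) (w_star F c h m) (r_star F m).
Proof.
split; first by exists (alloc_star F c h m mu), (w_star F c h m), (r_star F m);
  exact: alloc_star_equilibrium.
split.
  move=> A w r eqA A'; apply: equilibrium_output_max eqA.
  - exact: nsp_h_gt0.
  - exact: Fm_le1.
split; last exact: alloc_star_equilibrium.
by move=> A w r eqA; split; [exact: equilibrium_rental eqA|exact: equilibrium_wage eqA].
Qed.

End NoSynergy.

Theorem mainTheorem7 (R : realType) (f : R * R -> R) (c : R) (h : R * R) (mu : R) :
  density_full_support f ->
  0 < c < 1 ->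
  0 < h.1 < 1 -> 0 < h.2 < 1 ->
  0 < mu ->
  abundance (cdf2 f) c h mu ->
  forall m : R * R, in_unit_square m ->
    let F := cdf2 f in
    (exists (A : alloc R) (w r : R), equilibrium F c h m mu A w r) /\
    (forall (A : alloc R) (w r : R), equilibrium F c h m mu A w r ->
       forall A' : alloc R, feasible F c h m mu A' ->
         output F c h m A' <= output F c h m A) /\
    (forall (A : alloc R) (w r : R), equilibrium F c h m mu A w r ->
       r = F m /\ w = w_star F c h m) /\
    equilibrium F c h m mu (alloc_star F c h m mu) (w_star F c h m) (r_star F m).
Proof.
(* [0 < mu] is implied by (A). *)
move=> f_density /andP[c_gt0 c_lt1] /andP[h1_gt0 h1_lt1] /andP[h2_gt0 h2_lt1] _ abund.
move=> m m_unit F.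
apply: no_synergy_equilibrium => //.
- exact: cdf2_unit.
- exact: cdf2_monotone.
- by apply: cdf2_right_lt1; rewrite // ltW.
- by apply: cdf2_top_lt1; rewrite // ltW.
- by split; rewrite ltW // ltW.
Qed.
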